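(* Let $P:\mathcal{C}^{\mathrm{op}}\to\mathbf{Pos}$ be a Gödel doctrine, let $I$ be an object of $\mathcal{C}$ and let $\alpha\in P(I)$. Then there exist objects $U,X$ of $\mathcal{C}$ and a quantifier-free predicate $\alpha_D\in P(I\times U\times X)$ such that \[ i:I\;|\;\alpha(i)\dashv\vdash \exists u:U.\,\forall x:X.\,\alpha_D(i,u,x).\]
   Context: A doctrine is a functor $P:\mathcal{C}^{\mathrm{op}}\to\mathbf{Pos}$ where $\mathcal{C}$ has finite products; for an arrow $f$, $P_f$ denotes the monotone map $P(f)$ (reindexing/substitution). $P$ is existential (resp. universal) if for every product projection $\pi_i:A_1\times A_2\to A_i$ the map $P_{\pi_i}:P(A_i)\to P(A_1\times A_2)$ has a left adjoint $\exists_{\pi_i}$ (resp. right adjoint $\forall_{\pi_i}$) satisfying the Beck–Chevalley condition: for every pullback square of a projection $\pi:X\to A$ along $f:A'\to A$, with resulting projection $\pi':X'\to A'$ and map $f':X'\to X$, one has $\exists_{\pi'}P_{f'}\beta=P_f\exists_\pi\beta$ (resp. $\forall_{\pi'}P_{f'}\beta=P_f\forall_\pi\beta$) for all $\beta\in P(X)$. Internal-language notation: $a_1:A_1,\dots,a_n:A_n\;|\;\phi\vdash\psi$ means $\phi\le\psi$ in $P(A_1\times\dots\times A_n)$; $\dashv\vdash$ means both directions; $\exists b:B.\psi(a,b)$ and $\forall b:B.\psi(a,b)$ denote $\exists_{\pi_A}\psi$ and $\forall_{\pi_A}\psi$ for $\pi_A:A\times B\to A$; substitution of a term $g$ denotes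 reindexing $P_g$. In an existential doctrine $P$, $\alpha\in P(A)$ is an existential splitting if for every object $B$ and every $\beta\in P(A\times B)$ with $\alpha\le\exists_{\pi_A}\beta$ there is an arrow $g:A\to B$ with $\alpha\le P_{\langle 1_A,g\rangle}\beta$; $\alpha\in P(I)$ is existential-free if $P_f(\alpha)$ is an existential splitting for every arrow $f:A\to I$. Dually, in a universal doctrine $Q$, $\alpha\in Q(A)$ is a universal splitting if for every $B$ and $\beta\in Q(A\times B)$ with $\forall_{\pi_A}\beta\le\alpha$ there is $g:A\to B$ with $Q_{\langle 1_A,g\rangle}\beta\le\alpha$; $\alpha\in Q(I)$ is universal-free if $Q_f(\alpha)$ is a universal splitting for every $f:A\to I$. An existential doctrine $P$ has enough existential-free predicates if for every $I$ and $\alpha\in P(I)$ there are an object $A$ and an existential-free $\beta\in P(I\times A)$ with $\alpha=\exists_{\pi_I}\beta$; a universal doctrine has enough universal-free predicates if for every $I$ and $\alpha$ there are $A$ and a universal-free $\beta\in P(I\times A)$ with $\alpha=\forall_{\pi_I}\beta$. A Gödel doctrine is a doctrine $P:\mathcal{C}^{\mathrm{op}}\to\mathbf{Pos}$ such that: (1) $\mathcal{C}$ is cartesian closed; (2) $P$ is existential and universal; (3) $P$ has enough existential-free predicates; (4) existential-free predicates are stable under universal quantification, i.e. if $\alpha\in P(A)$ is existential-free then $\forall_\pi\alpha$ is existential-free for every projection $\pi$ out of $A$; (5) the sub-doctrine $P'$ of $P$ with $P'(A)$ the poset of existential-free predicates of $P(A)$ (a universal doctrine, with the universal quantifiers of $P$,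 by (4)) has enough universal-free predicates. A predicate of $P$ is quantifier-free if it is existential-free in $P$ and universal-free in $P'$. *)

Set Implicit Arguments.
Unset Strict Implicit.

Record Category := {
  ob :> Type;
  hom : ob -> ob -> Type;
  idm : forall A, hom A A;
  comp : forall A B C, hom B C -> hom A B -> hom A C;
  comp_id_l : forall A B (f : hom A B), comp (idm B) f = f;
  comp_id_r : forall A B (f : hom A B), comp f (idm A) = f;
  comp_assoc : forall A B C D (h : hom C D) (g : hom B C) (f : hom A B),
      comp h (comp g f) = comp (comp h g) f
}.
Arguments hom {c} _ _.
Arguments idm {c} _.
Arguments comp {c A B C} _ _.

Record CartCat := {
  cat :> Category;
  term : cat;
  bang : forall A : cat, hom A term;
  bang_uniq : forall (A : cat) (f : hom A term), f = bang A;
  prod : cat -> cat -> cat;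
  p1 : forall A B : cat, hom (prod A B) A;
  p2 : forall A B : cat, hom (prod A B) B;
  pair : forall (C A B : cat), hom C A -> hom C B -> hom C (prod A B);
  p1_pair : forall C A B (f : hom C A) (g : hom C B), comp (p1 A B) (pair f g) = f;
  p2_pair : forall C A B (f : hom C A) (g : hom C B), comp (p2 A B) (pair f g) = g;
  pair_uniq : forall C A B (h : hom C (prod A B)),
      h = pair (comp (p1 A B) h) (comp (p2 A B) h)
}.
Arguments term {c}.
Arguments bang {c} _.
Arguments prod {c} _ _.
Arguments p1 {c} _ _.
Arguments p2 {c} _ _.
Arguments pair {c C A B} _ _.

Definition prodmap (C : CartCat) (A A' B B' : C) (f : hom A A') (g : hom B B')
  : hom (prod A B) (prod A' B') :=
  pair (comp f (p1 A B)) (comp g (p2 A B)).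

Record CCC := {
  ccat :> CartCat;
  exp : ccat -> ccat -> ccat;                  (* exp A B = B^A *)
  ev : forall A B : ccat, hom (prod (exp A B) A) B;
  curry : forall (C A B : ccat), hom (prod C A) B -> hom C (exp A B);
  ev_curry : forall C A B (f : hom (prod C A) B),
      comp (ev A B) (prodmap (curry f) (idm A)) = f;
  curry_uniq : forall C A B (f : hom (prod C A) B) (g : hom C (exp A B)),
      comp (ev A B) (prodmap g (idm A)) = f -> g = curry f
}.

Record Doctrine (C : CartCat) := {
  pred :> C -> Type;
  ple : forall A : C, pred A -> pred A -> Prop;
  ple_refl : forall A (a : pred A), ple a a;
  ple_trans : forall A (a b c : pred A), ple a b -> ple b c -> ple a c;
  ple_antisym : forall A (a b : pred A), ple a b -> ple b a -> a = b;
  reidx : forall A B : C, hom A B -> pred B -> pred A;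
  reidx_mono : forall A B (f : hom A B) (a b : pred B),
      ple a b -> ple (reidx f a) (reidx f b);
  reidx_id : forall A (a : pred A), reidx (idm A) a = a;
  reidx_comp : forall A B D (f : hom A B) (g : hom B D) (a : pred D),
      reidx (comp g f) a = reidx f (reidx g a)
}.
Arguments ple {C d A} _ _.
Arguments reidx {C d A B} _ _.

Section Quantifiers.
Variable C : CartCat.
Variable P : Doctrine C.

(* Left adjoints to P_{p1}, P_{p2} with Beck-Chevalley (for the canonical
   pullback of a product projection along an arrow). *)
Definition is_existential
  (ex1 : forall A B : C, P (prod A B) -> P A)
  (ex2 : forall A B : C, P (prod A B) -> P B) : Prop :=
  (forall (A B : C) (b : P (prod A B)) (a : P A),
      ple (ex1 A B b) a <-> ple b (reidx (p1 A B) a)) /\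
  (forall (A B : C) (b : P (prod A B)) (a : P B),
      ple (ex2 A B b) a <-> ple b (reidx (p2 A B) a)) /\
  (forall (A A' B : C) (f : hom A' A) (b : P (prod A B)),
      ex1 A' B (reidx (prodmap f (idm B)) b) = reidx f (ex1 A B b)) /\
  (forall (A B B' : C) (f : hom B' B) (b : P (prod A B)),
      ex2 A B' (reidx (prodmap (idm A) f) b) = reidx f (ex2 A B b)).

Definition is_universal
  (all1 : forall A B : C, P (prod A B) -> P A)
  (all2 : forall A B : C, P (prod A B) -> P B) : Prop :=
  (forall (A B : C) (b : P (prod A B)) (a : P A),
      ple a (all1 A B b) <-> ple (reidx (p1 A B) a) b) /\
  (forall (A B : C) (b : P (prod A B)) (a : P B),
      ple a (all2 A B b) <-> ple (reidx (p2 A B) a) b) /\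
  (forall (A A' B : C) (f : hom A' A) (b : P (prod A B)),
      all1 A' B (reidx (prodmap f (idm B)) b) = reidx f (all1 A B b)) /\
  (forall (A B B' : C) (f : hom B' B) (b : P (prod A B)),
      all2 A B' (reidx (prodmap (idm A) f) b) = reidx f (all2 A B b)).

Variable ex1 : forall A B : C, P (prod A B) -> P A.
Variable all1 : forall A B : C, P (prod A B) -> P A.
Variable all2 : forall A B : C, P (prod A B) -> P B.

Definition existential_splitting (A : C) (a : P A) : Prop :=
  forall (B : C) (b : P (prod A B)),
    ple a (@ex1 A B b) ->
    exists g : hom A B, ple a (reidx (pair (idm A) g) b).

Definition existential_free (I : C) (a : P I) : Prop :=
  forall (A : C) (f : hom A I), existential_splitting (reidx f a).

Definition enough_existential_free : Prop :=
  forall (I : C) (a : P I), exists (A : C) (b : P (prod I A)),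
    existential_free b /\ a = @ex1 I A b.

Definition ef_stable_under_forall : Prop :=
  forall (A B : C) (a : P (prod A B)),
    existential_free a -> existential_free (@all1 A B a) /\ existential_free (@all2 A B a).

(* Universal splittings / universal-free predicates in the sub-doctrine P'
   of existential-free predicates (predicates of P' are the existential-free
   predicates of P, with order, reindexing and forall inherited from P). *)
Definition universal_splitting' (A : C) (a : P A) : Prop :=
  forall (B : C) (b : P (prod A B)),
    existential_free b ->
    ple (@all1 A B b) a ->
    exists g : hom A B, ple (reidx (pair (idm A) g) b) a.

Definition universal_free' (I : C) (a : P I) : Prop :=
  forall (A : C) (f : hom A I), universal_splitting' (reidx f a).

Definition enough_universal_free' : Prop :=
  forall (I : C) (a : P I), existential_free a ->
    exists (A : C) (b : P (prod I A)),
      existential_free b /\ universal_free' b /\ a = @all1 I A b.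

Definition quantifier_free (I : C) (a : P I) : Prop :=
  existential_free a /\ universal_free' a.

End Quantifiers.

Record GodelDoctrine := {
  gcat : CCC;
  gP : Doctrine gcat;
  gex1 : forall A B : gcat, gP (prod A B) -> gP A;
  gex2 : forall A B : gcat, gP (prod A B) -> gP B;
  gall1 : forall A B : gcat, gP (prod A B) -> gP A;
  gall2 : forall A B : gcat, gP (prod A B) -> gP B;
  g_existential : is_existential gex1 gex2;
  g_universal : is_universal gall1 gall2;
  g_enough_ef : enough_existential_free gex1;
  g_ef_stable : ef_stable_under_forall gex1 gall1 gall2;
  g_enough_uf : enough_universal_free' gex1 gall1
}.


Section PrenexNormalForm.

Context {C : CartCat} {P : Doctrine C} {ex1 all1 : forall A B : C, P (prod A B) -> P A}.
Hypothesis enough_ef : enough_existential_free ex1.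
Hypothesis enough_uf : enough_universal_free' ex1 all1.

Lemma exists_forall_quantifier_free {I : C} (alpha : P I) :
  exists (U X : C) (alphaD : P (prod (prod I U) X)),
    quantifier_free ex1 all1 alphaD /\
    alpha = ex1 I U (all1 (prod I U) X alphaD).
Proof.
  destruct (enough_ef _ alpha) as (U & beta & beta_ef & alpha_eq).
  destruct (enough_uf _ _ beta_ef) as (X & alphaD & alphaD_ef & alphaD_uf & beta_eq).
  exists U, X, alphaD.
  split.
  - split; assumption.
  - rewrite alpha_eq, beta_eq; reflexivity.
Qed.

End PrenexNormalForm.

Theorem theorem1 (G : GodelDoctrine) (I : gcat G) (alpha : gP G I) :
  exists (U X : gcat G) (alphaD : gP G (prod (prod I U) X)),
    quantifier_free (@gex1 G) (@gall1 G) alphaD /\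
    ple alpha (@gex1 G I U (@gall1 G (prod I U) X alphaD)) /\
    ple (@gex1 G I U (@gall1 G (prod I U) X alphaD)) alpha.
Proof.
  destruct (exists_forall_quantifier_free (@g_enough_ef G) (@g_enough_uf G) alpha)
    as (U & X & alphaD & alphaD_qf & alpha_eq).
  exists U, X, alphaD.
  rewrite <- alpha_eq.
  split; [assumption | split; apply ple_refl].
Qed.
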